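(* Let $P$ be a probability distribution on $\mathbb{R}^d$ supported in $\{x:\|x\|_2\le C\}$. Let $v_1,\dots,v_m\in\mathbb{R}^d$, $w_1,\dots,w_m>0$, $Z_i:=\mathbb E_{X\sim P}\exp(\langle v_i,X\rangle)$, and $$Q_G:=\sum_{i=1}^m\pi_iP_{v_i},\qquad \pi_i:=\frac{w_iZ_i}{\sum_j w_jZ_j}.$$ Let $\eta\in(0,1)$ and suppose $\widehat Z_i\in[(1-\eta)Z_i,(1+\eta)Z_i]$ for all $i$, and let $\widehat\pi_i:=\frac{w_i\widehat Z_i}{\sum_j w_j\widehat Z_j}$. Suppose further that for every $i$, $\widehat P_{v_i}$ is a probability distribution with $\mathcal W_2(\widehat P_{v_i},P_{v_i})\le\epsilon_{\mathrm{lin}}$ and $\operatorname{supp}(\widehat P_{v_i})\subseteq\{x:\|x\|_2\le C\}$. Let $\widehat Q_G:=\sum_{i=1}^m\widehat\pi_i\widehat P_{v_i}$. Then $$\mathcal W_2(\widehat Q_G,Q_G)\le\epsilon_{\mathrm{lin}}+2C\sqrt{\frac{\eta}{1-\eta}}.$$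
   Context: For $v\in\mathbb{R}^d$, $P_v(dx):=\frac{\exp(\langle v,x\rangle)}{Z_P(v)}P(dx)$ with $Z_P(v)=\mathbb E_{X\sim P}\exp(\langle v,X\rangle)$ is the linear exponential tilt of $P$. $\mathcal W_2$ is the Wasserstein-2 distance with Euclidean cost. *)

From HB Require Import structures.
From mathcomp Require Import all_boot all_order all_algebra.
From mathcomp Require Import all_classical all_reals all_analysis.
Set Implicit Arguments. Unset Strict Implicit. Unset Printing Implicit Defensive.
Import Order.TTheory GRing.Theory Num.Theory.
Import numFieldNormedType.Exports.
Local Open Scope classical_set_scope.
Local Open Scope ring_scope.

Definition Rd (R : realType) (d : nat) :=
  g_sigma_algebraType (@open ('rV[R]_d)).

Definition dotp (R : realType) (d : nat) (v x : 'rV[R]_d) : R :=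
  \sum_(k < d) v 0 k * x 0 k.

Definition enorm (R : realType) (d : nat) (x : 'rV[R]_d) : R :=
  Num.sqrt (\sum_(k < d) x 0 k ^+ 2).

Definition edist (R : realType) (d : nat) (x y : 'rV[R]_d) : R :=
  Num.sqrt (\sum_(k < d) (x 0 k - y 0 k) ^+ 2).

Definition Zpart (R : realType) (d : nat) (P : probability (Rd R d) R)
    (v : 'rV[R]_d) : R :=
  fine (\int[P]_x (expR (dotp v x))%:E)%E.

Definition tilt (R : realType) (d : nat) (P : probability (Rd R d) R)
    (v : 'rV[R]_d) : set (Rd R d) -> \bar R :=
  fun A => ((\int[P]_(x in A) (expR (dotp v x))%:E) * ((Zpart P v)^-1)%:E)%E.

Definition mixture (R : realType) (T : Type) (m : nat) (p : 'I_m -> R)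
    (mu : 'I_m -> set T -> \bar R) : set T -> \bar R :=
  fun A => (\sum_(i < m) (p i)%:E * mu i A)%E.

Definition mixw (R : realType) (m : nat) (w z : 'I_m -> R) (i : 'I_m) : R :=
  w i * z i / \sum_(j < m) w j * z j.

Definition coupling (R : realType) (d : nat) (mu nu : set (Rd R d) -> \bar R)
    (g : probability (Rd R d * Rd R d)%type R) : Prop :=
  (forall A : set (Rd R d), measurable A -> g (A `*` setT) = mu A) /\
  (forall B : set (Rd R d), measurable B -> g (setT `*` B) = nu B).

Definition W2sq (R : realType) (d : nat) (mu nu : set (Rd R d) -> \bar R)
    : \bar R :=
  ereal_inf [set (\int[g]_z (edist z.1 z.2 ^+ 2)%:E)%E
            | g in [set g : probability (Rd R d * Rd R d)%type R
                   | coupling mu nu g]].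

Definition W2 (R : realType) (d : nat) (mu nu : set (Rd R d) -> \bar R)
    : \bar R :=
  sqrte (W2sq mu nu).

(* Couple the two mixtures by gluing.  Take near-optimal couplings g_i of
   Phat_i and P_{v_i}; keep from each g_i the mass min(pihat_i, pi_i) and couple
   the leftover mass, of total t = TV(pihat, pi), as a product of the two
   leftover marginals.  The kept part costs at most eps_lin^2 and the leftover
   part at most (2C)^2, since every measure involved lives in the ball of
   radius C; hence W_2^2 <= eps_lin^2 + 4 C^2 t.  Comparing the normalisers of
   pihat and pi shows t <= eta <= eta / (1 - eta), and
   sqrt (a^2 + b^2) <= a + b concludes. *)

From Pilot Require Import Defs.
From HB Require Import structures.
From mathcomp Require Import all_boot all_order all_algebra.
From mathcomp Require Import all_classical all_reals all_analysis.
From mathcomp Require Import measurable_realfun lra.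
Set Implicit Arguments. Unset Strict Implicit. Unset Printing Implicit Defensive.
Import Order.TTheory GRing.Theory Num.Theory.
Import numFieldNormedType.Exports.
Local Open Scope classical_set_scope.
Local Open Scope ring_scope.

Section mixture_measure.
Local Open Scope ereal_scope.
Context d (T : measurableType d) (R : realType) (m : nat).
Variables (c : 'I_m -> {nonneg R}) (mu : 'I_m -> probability T R).

Definition mixture_measure := mixture (fun i => (c i)%:num) (fun i => mu i).

Let mixture_measure_msum : mixture_measure =
  msum (fun n => if insub n is Some i then mscale (c i) (mu i) else mzero) m.
Proof. by apply/funext => A; apply: eq_bigr => i _; rewrite valK. Qed.

Let mixture_measure0 : mixture_measure set0 = 0.
Proof. by rewrite mixture_measure_msum measure0. Qed.

Let mixture_measure_ge0 A : 0 <= mixture_measure A.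
Proof. by rewrite mixture_measure_msum measure_ge0. Qed.

Let mixture_measure_sigma_additive : semi_sigma_additive mixture_measure.
Proof. by rewrite mixture_measure_msum; exact: measure_semi_sigma_additive. Qed.

HB.instance Definition _ := isMeasure.Build _ _ _ mixture_measure
  mixture_measure0 mixture_measure_ge0 mixture_measure_sigma_additive.

Lemma mixture_measureT : mixture_measure setT = (\sum_i (c i)%:num)%:E.
Proof.
by rewrite -sumEFin; apply: eq_bigr => i _; rewrite probability_setT mule1.
Qed.

Let mixture_measure_fin A : measurable A -> mixture_measure A \is a fin_num.
Proof.
move=> mA; rewrite ge0_fin_numE ?measure_ge0//.
apply: (@le_lt_trans _ _ (mixture_measure setT)); last by rewrite mixture_measureT ltry.
by apply: le_measure; rewrite ?inE.
Qed.

HB.instance Definition _ := Measure_isFinite.Build _ _ _ mixture_measure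
  mixture_measure_fin.

Lemma ge0_integral_mixture_measure (f : T -> \bar R) :
  (forall x, 0 <= f x) -> measurable_fun setT f ->
  \int[mixture_measure]_x f x = \sum_i (c i)%:num%:E * \int[mu i]_x f x.
Proof.
move=> f0 mf; rewrite mixture_measure_msum (ge0_integral_measure_sum _ measurableT)//.
by apply: eq_bigr => i _; rewrite valK ge0_integral_mscale.
Qed.

End mixture_measure.

Section product_marginals.
Context d1 d2 (T1 : measurableType d1) (T2 : measurableType d2) (R : realType).

HB.instance Definition _ :=
  isMeasurableFun.Build _ _ _ _ (@fst T1 T2) measurable_fst.
HB.instance Definition _ :=
  isMeasurableFun.Build _ _ _ _ (@snd T1 T2) measurable_snd.

Lemma distribution_fst (g : probability (T1 * T2)%type R) A :
  distribution g fst A = g (A `*` setT).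
Proof. by rewrite setXT. Qed.

Lemma distribution_snd (g : probability (T1 * T2)%type R) B :
  distribution g snd B = g (setT `*` B).
Proof. by rewrite setTX. Qed.

End product_marginals.

Lemma measure_mulVr d (T : measurableType d) (R : realType)
    (mu : {measure set T -> \bar R}) (x : R) (A : set T) :
  measurable A -> mu setT = x%:E -> ((x^-1 * x)%:E * mu A = mu A)%E.
Proof.
move=> mA muT; have [x0|x0] := eqVneq x 0; last by rewrite mulVf ?mul1e.
have muA : (mu A <= mu setT)%E by apply: le_measure; rewrite ?inE.
rewrite muT x0 in muA.
by rewrite (@le_anti _ _ (mu A) 0%E) ?mule0 ?muA ?measure_ge0.
Qed.

Section total_variation.
Context (R : realDomainType) (m : nat).
Implicit Types p q e : 'I_m -> R.

Definition tv_dist p q := \sum_i (p i - Num.min (p i) (q i)).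

Lemma subr_min_ge0 (x y : R) : 0 <= x - Num.min x y.
Proof. by rewrite subr_ge0 ge_min lexx. Qed.

Lemma tv_dist_ge0 p q : 0 <= tv_dist p q.
Proof. by apply: sumr_ge0 => i _; exact: subr_min_ge0. Qed.

Lemma tv_distC p q : \sum_i p i = \sum_i q i -> tv_dist p q = tv_dist q p.
Proof.
move=> pq; rewrite /tv_dist !sumrB pq; congr (_ - _).
by apply: eq_bigr => i _; rewrite minC.
Qed.

Lemma tv_dist_le p q e :
  (forall i, 0 <= e i) -> (forall i, p i - q i <= e i) -> tv_dist p q <= \sum_i e i.
Proof.
move=> e0 pqe; apply: ler_sum => i _.
by case: (lerP (p i) (q i)) => _; [rewrite subrr; exact: e0 | exact: pqe].
Qed.

Lemma sum_min_tv p q :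
  \sum_i p i = 1 -> \sum_i Num.min (p i) (q i) = 1 - tv_dist p q.
Proof. by move=> p1; rewrite /tv_dist sumrB p1 opprB addrC subrK. Qed.

End total_variation.

Section gluing.
Context d1 d2 (T1 : measurableType d1) (T2 : measurableType d2) (R : realType).
Variables (m : nat) (p q : 'I_m -> R) (g : 'I_m -> probability (T1 * T2)%type R).
Hypotheses (p_ge0 : forall i, 0 <= p i) (q_ge0 : forall i, 0 <= q i).
Hypotheses (p_sum1 : \sum_i p i = 1) (q_sum1 : \sum_i q i = 1).

Let t := tv_dist p q.

Let overlap_ge0 i : 0 <= Num.min (p i) (q i).
Proof. by rewrite le_min p_ge0 q_ge0. Qed.

Let tV_ge0 : 0 <= t^-1. Proof. by rewrite invr_ge0 tv_dist_ge0. Qed.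

Let overlap i := NngNum (overlap_ge0 i).
Let p_excess i := NngNum (subr_min_ge0 (p i) (q i)).
Let q_excess i := NngNum (subr_min_ge0 (q i) (p i)).

Definition residual_fst := mixture_measure p_excess (fun i => distribution (g i) fst).
Definition residual_snd := mixture_measure q_excess (fun i => distribution (g i) snd).
HB.instance Definition _ := FiniteMeasure.on residual_fst.
HB.instance Definition _ := FiniteMeasure.on residual_snd.

Let sum_q_excess : \sum_i (q_excess i)%:num = t.
Proof. by rewrite -/(tv_dist q p) -tv_distC ?p_sum1 ?q_sum1. Qed.

Let residual_fstT : residual_fst setT = t%:E.
Proof. exact: mixture_measureT. Qed.

Let residual_sndT : residual_snd setT = t%:E.
Proof. by rewrite /residual_snd mixture_measureT sum_q_excess. Qed.

(* Each g_i keeps the mass min (p i) (q i) on which the weights agree; the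
   excess masses, both of total t, are glued independently, whence the factor
   t^-1 (if t = 0 both residuals vanish and t^-1 = 0 is harmless). *)
Definition gluing := measure_add (mixture_measure overlap g)
  (mscale (NngNum tV_ge0) (residual_fst \x residual_snd)%E).

HB.instance Definition _ := Measure.on gluing.

Let gluingE C : gluing C =
  (mixture_measure overlap g C + (t^-1)%:E * (residual_fst \x residual_snd) C)%E.
Proof. by rewrite /gluing measure_addE. Qed.

Let gluing_fst A : measurable A ->
  gluing (A `*` setT) = (\sum_(i < m) (p i)%:E * g i (A `*` setT))%E.
Proof.
move=> mA; rewrite gluingE product_measure1E//= residual_sndT.
rewrite muleCA muleC -EFinM (measure_mulVr mA residual_fstT).
rewrite /residual_fst /mixture_measure /mixture -big_split /=.
apply: eq_bigr => i _; rewrite distribution_fst -ge0_muleDl ?lee_fin ?subr_min_ge0//.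
by rewrite -EFinD addrC subrK.
Qed.

Let gluing_snd B : measurable B ->
  gluing (setT `*` B) = (\sum_(i < m) (q i)%:E * g i (setT `*` B))%E.
Proof.
move=> mB; rewrite gluingE product_measure1E//= residual_fstT.
rewrite muleA -EFinM (measure_mulVr mB residual_sndT).
rewrite /residual_snd /mixture_measure /mixture -big_split /=.
apply: eq_bigr => i _; rewrite distribution_snd -ge0_muleDl ?lee_fin ?subr_min_ge0//.
by rewrite -EFinD minC addrC subrK.
Qed.

Let gluing_setT : gluing setT = 1%E.
Proof.
rewrite -setXTT gluing_fst//; under eq_bigr do rewrite setXTT probability_setT mule1.
by rewrite sumEFin p_sum1.
Qed.

HB.instance Definition _ := Measure_isProbability.Build _ _ _ gluing gluing_setT.

Section bounded_cost.
Variables (f : T1 * T2 -> \bar R) (S1 : set T1) (S2 : set T2) (K : R).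
Hypotheses (mS1 : measurable S1) (mS2 : measurable S2) (K_ge0 : 0 <= K).
Hypotheses (f_ge0 : forall z, (0 <= f z)%E) (mf : measurable_fun setT f).
Hypothesis f_le : forall z, S1 z.1 -> S2 z.2 -> (f z <= K%:E)%E.
Hypothesis g_S1 : forall i, g i (~` S1 `*` setT) = 0%E.
Hypothesis g_S2 : forall i, g i (setT `*` ~` S2) = 0%E.

Let residual_product_integral_le :
  (\int[residual_fst \x residual_snd]_z f z <= (K * (t * t))%:E)%E.
Proof.
have mCS1 := measurableC mS1; have mCS2 := measurableC mS2.
have residual_fst_null : residual_fst (~` S1) = 0%E.
  by apply: big1 => i _ /=; rewrite distribution_fst g_S1 mule0.
have residual_snd_null : residual_snd (~` S2) = 0%E.
  by apply: big1 => i _ /=; rewrite distribution_snd g_S2 mule0.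
set N := ~` S1 `*` setT `|` setT `*` ~` S2.
have mN : measurable N by apply: measurableU; exact: measurableX.
have product_null : (residual_fst \x residual_snd)%E N = 0%E.
  apply/le_anti; rewrite measure_ge0 andbT.
  apply: le_trans (measureU2 _ _ _) _; try exact: measurableX.
  rewrite /= !product_measure1E//=.
  by rewrite residual_fst_null residual_snd_null mul0e mule0 adde0.
apply: le_trans (@ae_ge0_le_integral _ _ _ _ setT measurableT f (cst K%:E)
  (fun z _ => f_ge0 z) mf (fun _ _ => K_ge0) (measurable_cst _) _) _.
  exists N; split => // z /= fzK.
  have [z1|] := pselect (S1 z.1); last by left.
  have [z2|] := pselect (S2 z.2); last by right.
  by exfalso; apply: fzK => _; exact: f_le.
by rewrite integral_cst// -setXTT /= product_measure1E//= residual_fstT residual_sndT.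
Qed.

Lemma gluing_integral_le : (\int[gluing]_z f z <=
    \sum_(i < m) (Num.min (p i) (q i))%:E * \int[g i]_z f z + (t * K)%:E)%E.
Proof.
rewrite /gluing ge0_integral_measure_add// ge0_integral_mixture_measure//.
rewrite ge0_integral_mscale//; apply: leeD; first exact: lexx.
apply: le_trans (lee_wpmul2l _ residual_product_integral_le) _.
  by rewrite lee_fin.
rewrite -EFinM lee_fin /=; have [->|t0] := eqVneq t 0; first by rewrite !(mulr0, mul0r).
by rewrite mulrCA (mulrA t^-1) mulVf// mul1r mulrC.
Qed.

End bounded_cost.

Lemma gluing_coupling : exists G : probability (T1 * T2)%type R,
  [/\ forall A, measurable A ->
        G (A `*` setT) = (\sum_(i < m) (p i)%:E * g i (A `*` setT))%E,
      forall B, measurable B ->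
        G (setT `*` B) = (\sum_(i < m) (q i)%:E * g i (setT `*` B))%E &
      forall (f : T1 * T2 -> \bar R) (S1 : set T1) (S2 : set T2) (K : R),
        measurable S1 -> measurable S2 -> 0 <= K ->
        (forall z, 0 <= f z)%E -> measurable_fun setT f ->
        (forall z, S1 z.1 -> S2 z.2 -> (f z <= K%:E)%E) ->
        (forall i, g i (~` S1 `*` setT) = 0%E) ->
        (forall i, g i (setT `*` ~` S2) = 0%E) ->
        (\int[G]_z f z <= \sum_(i < m) (Num.min (p i) (q i))%:E * \int[g i]_z f z
                          + (tv_dist p q * K)%:E)%E].
Proof.
exists gluing; split; [exact: gluing_fst | exact: gluing_snd |].
exact: gluing_integral_le.
Qed.

End gluing.

Section euclidean_space.
Context (R : realType) (d : nat).
Implicit Types (x y v : 'rV[R]_d).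

Lemma enorm_sqr x : enorm x ^+ 2 = \sum_k x 0 k ^+ 2.
Proof. by rewrite sqr_sqrtr// sumr_ge0// => k _; rewrite sqr_ge0. Qed.

Lemma edist_sqr x y : Defs.edist x y ^+ 2 = \sum_k (x 0 k - y 0 k) ^+ 2.
Proof. by rewrite sqr_sqrtr// sumr_ge0// => k _; rewrite sqr_ge0. Qed.

Lemma edist_sqr_le x y : Defs.edist x y ^+ 2 <= 2 * enorm x ^+ 2 + 2 * enorm y ^+ 2.
Proof.
rewrite edist_sqr !enorm_sqr !mulr_sumr -big_split /=; apply: ler_sum => k _.
by have := sqr_ge0 (x 0 k + y 0 k); nra.
Qed.

Lemma abs_coord_le_enorm x k : `|x 0 k| <= enorm x.
Proof.
rewrite -sqrtr_sqr ler_sqrt ?sumr_ge0// => [|j _]; last exact: sqr_ge0.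
by rewrite (bigD1 k)//= lerDl sumr_ge0// => j _; rewrite sqr_ge0.
Qed.

Lemma abs_dotp_le v x : `|dotp v x| <= (\sum_k `|v 0 k|) * enorm x.
Proof.
rewrite mulr_suml; apply: le_trans (ler_norm_sum _ _ _) _.
by apply: ler_sum => k _; rewrite normrM ler_wpM2l// abs_coord_le_enorm.
Qed.

Lemma measurable_fun_continuous (f : 'rV[R]_d -> R) :
  continuous f -> measurable_fun [set: Rd R d] f.
Proof.
move=> cf; apply: (measurability _ (RGenOpens.measurableE R)).
move=> _ [_ [a [b ->]] <-]; apply: sub_sigma_algebra; rewrite setTI.
by apply: (proj1 (continuousP _) cf); exact: interval_open.
Qed.

Lemma measurable_coord k : measurable_fun [set: Rd R d] (fun x => x 0 k).
Proof. by apply: measurable_fun_continuous; exact: coord_continuous. Qed.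

Lemma measurable_dotp v : measurable_fun [set: Rd R d] (dotp v).
Proof.
by apply: measurable_sum => k; apply: measurable_funM => //; exact: measurable_coord.
Qed.

Lemma measurable_enorm : measurable_fun [set: Rd R d] (@enorm R d).
Proof.
apply: measurableT_comp (continuous_measurable_fun (@sqrt_continuous R)) _.
by apply: measurable_sum => k; apply: measurable_funX; exact: measurable_coord.
Qed.

Lemma measurable_enorm_le C : measurable [set x : Rd R d | enorm x <= C].
Proof.
have := measurable_enorm measurableT (measurable_itv `]-oo, C]).
by rewrite setTI; congr measurable; apply/seteqP; split => x /=; rewrite in_itv.
Qed.

Lemma measurable_edist_sqr :
  measurable_fun [set: Rd R d * Rd R d] (fun z => Defs.edist z.1 z.2 ^+ 2).
Proof.
apply: measurable_funX.
apply: measurableT_comp (continuous_measurable_fun (@sqrt_continuous R)) _.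
apply: measurable_sum => k; apply: measurable_funX; apply: measurable_funB.
- exact: measurableT_comp (measurable_coord k) measurable_fst.
- exact: measurableT_comp (measurable_coord k) measurable_snd.
Qed.

End euclidean_space.

Lemma integral_prob_bounds dT (T : measurableType dT) (R : realType)
    (P : probability T R) (B : set T) (f : T -> R) (a b : R) :
  measurable B -> P B = 1%E -> measurable_fun setT f -> 0 <= a ->
  (forall x, 0 <= f x) -> (forall x, B x -> a <= f x <= b) ->
  (a%:E <= \int[P]_x (f x)%:E <= b%:E)%E.
Proof.
move=> mB PB mf a_ge0 f_ge0 f_ab.
have PCB : P (~` B) = 0%E by rewrite probability_setC// PB subee.
rewrite (ge0_negligible_integral _ _ _ _ PCB)//; last first.
- by move=> x _; rewrite lee_fin.
- exact/measurable_EFinP.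
- exact: measurableC.
rewrite setTD setCK.
have int_cst c : (\int[P]_(x in B) (cst c%:E) x = c%:E)%E.
  by rewrite integral_cst// -[X in (_ * X)%E]/(P B) PB mule1.
apply/andP; split.
- rewrite -(int_cst a); apply: ge0_le_integral => //.
  + by apply/measurable_EFinP; exact: measurable_funTS.
  + by move=> x Bx; rewrite lee_fin; case/andP: (f_ab x Bx).
- rewrite -(int_cst b); apply: ge0_le_integral => //.
  + by move=> x _; rewrite lee_fin.
  + by apply/measurable_EFinP; exact: measurable_funTS.
  + by move=> x Bx; rewrite lee_fin; case/andP: (f_ab x Bx).
Qed.

Section partition_function.
Context (R : realType) (d : nat) (P : probability (Rd R d) R).

Lemma tilt_null v N : measurable N -> P N = 0%E -> tilt P v N = 0%E.
Proof.
move=> mN PN; rewrite /tilt null_set_integral ?mul0e//.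
apply/measurable_EFinP/measurable_funTS.
by apply: measurableT_comp; [exact: measurable_expR | exact: measurable_dotp].
Qed.

Variable C : R.
Hypothesis P_ball : P [set x : Rd R d | enorm x <= C] = 1%E.

Lemma ball_radius_ge0 : 0 <= C.
Proof.
rewrite leNgt; apply/negP => C_lt0.
have ball0 : [set x : Rd R d | enorm x <= C] = set0.
  by apply/seteqP; split => x //=; rewrite leNgt (lt_le_trans C_lt0)// sqrtr_ge0.
by move: P_ball; rewrite ball0 measure0 => /eqP; rewrite eq_sym onee_eq0.
Qed.

Lemma Zpart_gt0 v : 0 < Zpart P v.
Proof.
set K := (\sum_k `|v 0 k|) * C.
have exp_bounds (x : Rd R d) : enorm x <= C -> expR (- K) <= expR (dotp v x) <= expR K.
  move=> xC; rewrite !ler_expR -ler_norml (le_trans (abs_dotp_le v x))//.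
  by rewrite ler_wpM2l// sumr_ge0.
have /andP[lo hi] := integral_prob_bounds (@measurable_enorm_le R d C) P_ball
  (measurableT_comp (@measurable_expR R) (measurable_dotp v)) (expR_ge0 _)
  (fun x => expR_ge0 _) exp_bounds.
rewrite /Zpart -lte_fin fineK ?(lt_le_trans _ lo) ?lte_fin ?expR_gt0//.
by rewrite ge0_fin_numE ?(le_lt_trans hi) ?ltry// (le_trans _ lo)// lee_fin expR_ge0.
Qed.

End partition_function.

Lemma sumr_ord_gt0 (R : numDomainType) (m : nat) (f : 'I_m -> R) :
  (0 < m)%N -> (forall i, 0 < f i) -> 0 < \sum_i f i.
Proof.
move=> m_gt0 f_gt0; rewrite (bigD1 (Ordinal m_gt0))//= ltr_pwDl//.
by rewrite sumr_ge0// => i _; exact: ltW.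
Qed.

Section mixture_weights.
Context (R : realType) (m : nat) (w z : 'I_m -> R).
Hypothesis wz_gt0 : forall i, 0 < w i * z i.

Lemma mixw_ge0 i : 0 <= mixw w z i.
Proof. by rewrite divr_ge0 ?sumr_ge0// => [|j _]; exact: ltW. Qed.

Lemma sum_mixw : (0 < m)%N -> \sum_i mixw w z i = 1.
Proof.
by move=> m_gt0; rewrite -mulr_suml divff// lt0r_neq0// sumr_ord_gt0.
Qed.

End mixture_weights.

Lemma tv_dist_mixw_le (R : realType) (m : nat) (w z zh : 'I_m -> R) (eta : R) :
  (0 < m)%N -> (forall i, 0 < w i) -> (forall i, 0 < z i) -> 0 <= eta -> eta < 1 ->
  (forall i, (1 - eta) * z i <= zh i <= (1 + eta) * z i) ->
  tv_dist (mixw w zh) (mixw w z) <= eta.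
Proof.
move=> m_gt0 w_gt0 z_gt0 eta_ge0 eta_lt1 zh_bounds.
have wz_gt0 i : 0 < w i * z i by rewrite mulr_gt0.
have wzh_gt0 i : 0 < w i * zh i.
  rewrite mulr_gt0//; case/andP: (zh_bounds i) => + _; apply: lt_le_trans.
  by rewrite mulr_gt0 ?subr_gt0.
have wzh_bounds i : (1 - eta) * (w i * z i) <= w i * zh i <= (1 + eta) * (w i * z i).
  by case/andP: (zh_bounds i) => lo hi; rewrite !(mulrCA _ (w i)) !ler_pM2l// lo hi.
set s := \sum_j w j * z j; set sh := \sum_j w j * zh j.
have s_gt0 : 0 < s by exact: sumr_ord_gt0.
have sh_gt0 : 0 < sh by exact: sumr_ord_gt0.
have e_ge0 i : 0 <= eta * mixw w z i by rewrite mulr_ge0// mixw_ge0.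
rewrite -[leRHS]mulr1 -(sum_mixw wz_gt0 m_gt0) mulr_sumr.
have [s_le_sh|sh_lt_s] := lerP s sh.
- apply: tv_dist_le => // i; rewrite /mixw -/s -/sh.
  have zh_sh : w i * zh i / sh <= w i * zh i / s.
    by rewrite ler_pM2l// lef_pV2 ?posrE.
  have zh_s : w i * zh i / s <= (1 + eta) * (w i * z i / s).
    by rewrite mulrA ler_pM2r ?invr_gt0//; case/andP: (wzh_bounds i) => _ ->.
  lra.
- rewrite tv_distC ?sum_mixw//; apply: tv_dist_le => // i; rewrite /mixw -/s -/sh.
  have zh_sh : w i * zh i / s <= w i * zh i / sh.
    by rewrite ler_pM2l// lef_pV2 ?posrE// ltW.
  have zh_s : (1 - eta) * (w i * z i / s) <= w i * zh i / s.
    by rewrite mulrA ler_pM2r ?invr_gt0//; case/andP: (wzh_bounds i) => ->.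
  lra.
Qed.

Lemma sqrt_add_sqr_le (R : rcfType) (a b : R) :
  0 <= a -> 0 <= b -> Num.sqrt (a ^+ 2 + b ^+ 2) <= a + b.
Proof.
move=> a_ge0 b_ge0; rewrite -[leRHS]ger0_norm ?addr_ge0// -sqrtr_sqr ler_sqrt ?sqr_ge0//.
by nra.
Qed.

Section wasserstein.
Context (R : realType) (d : nat).
Implicit Types (mu nu : set (Rd R d) -> \bar R).

Lemma W2sq_le_sqr mu nu e :
  0 <= e -> (W2 mu nu <= e%:E)%E -> (W2sq mu nu <= (e ^+ 2)%:E)%E.
Proof.
by move=> e_ge0 W2_le; rewrite -lee_sqrt ?lee_fin ?sqr_ge0//= sqrtr_sqr ger0_norm.
Qed.


Lemma W2sq_lt_coupling mu nu x : (W2sq mu nu < x)%E ->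
  exists g, coupling mu nu g /\ (\int[g]_z (Defs.edist z.1 z.2 ^+ 2)%:E < x)%E.
Proof. by case/ereal_inf_lt => _ [g g_cpl <-] lt_x; exists g. Qed.

Lemma W2_le_add mu nu a b : 0 <= a -> 0 <= b ->
  (W2sq mu nu <= (a ^+ 2 + b ^+ 2)%:E)%E -> (W2 mu nu <= (a + b)%:E)%E.
Proof.
move=> a_ge0 b_ge0 W2sq_le; apply: (@le_trans _ _ (sqrte (a ^+ 2 + b ^+ 2)%:E)).
  by rewrite /W2 lee_sqrt// lee_fin addr_ge0 ?sqr_ge0.
by rewrite lee_fin sqrt_add_sqr_le.
Qed.

End wasserstein.

Section wasserstein_mixture.
Context (R : realType) (d m : nat) (C e : R).
Variables (p q : 'I_m -> R) (mu : 'I_m -> probability (Rd R d) R).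
Variable nu : 'I_m -> set (Rd R d) -> \bar R.
Hypotheses (p_ge0 : forall i, 0 <= p i) (q_ge0 : forall i, 0 <= q i).
Hypotheses (p_sum1 : \sum_i p i = 1) (q_sum1 : \sum_i q i = 1).
Let ball := [set x : Rd R d | enorm x <= C].
Hypothesis mu_ball : forall i, mu i (~` ball) = 0%E.
Hypothesis nu_ball : forall i, nu i (~` ball) = 0%E.
Hypotheses (e_ge0 : 0 <= e) (W2sq_le : forall i, (W2sq (mu i) (nu i) <= e%:E)%E).

Let cost (z : Rd R d * Rd R d) := (Defs.edist z.1 z.2 ^+ 2)%:E.

Let cost_le z : ball z.1 -> ball z.2 -> (cost z <= (4 * C ^+ 2)%:E)%E.
Proof.
rewrite /ball /= => z1C z2C; rewrite lee_fin (le_trans (edist_sqr_le _ _))//.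
have := sqrtr_ge0 (\sum_k z.1 0 k ^+ 2); have := sqrtr_ge0 (\sum_k z.2 0 k ^+ 2).
rewrite -/(enorm z.1) -/(enorm z.2); nra.
Qed.

Lemma W2sq_mixture_le :
  (W2sq (mixture p mu) (mixture q nu) <= (e + 4 * C ^+ 2 * tv_dist p q)%:E)%E.
Proof.
apply/lee_addgt0Pr => delta delta_gt0.
have near_optimal i : exists g, coupling (mu i) (nu i) g /\
    (\int[g]_z cost z <= (e + delta)%:E)%E.
  have [|g [g_cpl g_cost]] := @W2sq_lt_coupling _ _ (mu i) (nu i) (e + delta)%:E.
    by apply: le_lt_trans (W2sq_le i) _; rewrite lte_fin ltrDl.
  by exists g; split => //; exact: ltW.
have [g g_opt] := choice near_optimal.
have [G [G_fst G_snd G_cost]] := gluing_coupling g p_ge0 q_ge0 p_sum1 q_sum1.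
have G_cpl : coupling (mixture p mu) (mixture q nu) G.
  split => A mA; [rewrite G_fst | rewrite G_snd] => //; apply: eq_bigr => i _.
  - by rewrite (g_opt i).1.1.
  - by rewrite (g_opt i).1.2.
have mball : measurable ball := measurable_enorm_le C.
apply: le_trans (ereal_inf_lbound _) _; first by exists G.
apply: le_trans (G_cost cost ball ball (4 * C ^+ 2) mball mball _ _ _ cost_le _ _) _.
- by rewrite mulr_ge0 ?sqr_ge0.
- by move=> z; rewrite lee_fin sqr_ge0.
- by apply/measurable_EFinP; exact: measurable_edist_sqr.
- by move=> i; rewrite (g_opt i).1.1 ?mu_ball//; exact: measurableC.
- by move=> i; rewrite (g_opt i).1.2 ?nu_ball//; exact: measurableC.
have sum_le : (\sum_(i < m) (Num.min (p i) (q i))%:E * \int[g i]_z cost z <=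
    \sum_(i < m) (Num.min (p i) (q i))%:E * (e + delta)%:E)%E.
  apply: lee_sum => i _; apply: lee_wpmul2l; last exact: (g_opt i).2.
  by rewrite lee_fin le_min p_ge0 q_ge0.
apply: le_trans (leeD sum_le (lexx _)) _.
under eq_bigr do rewrite -EFinM.
rewrite sumEFin -mulr_suml sum_min_tv// -!EFinD lee_fin.
have t_ge0 := tv_dist_ge0 p q.
have := mulr_ge0 t_ge0 (addr_ge0 e_ge0 (ltW delta_gt0)); nra.
Qed.

End wasserstein_mixture.

Theorem lemmaB1 (R : realType) (d m : nat) (P : probability (Rd R d) R)
  (C : R) (v : 'I_m -> 'rV[R]_d) (w : 'I_m -> R) (eta eps_lin : R)
  (Zhat : 'I_m -> R) (Phat : 'I_m -> probability (Rd R d) R) :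
  (0 < m)%N ->
  P [set x : Rd R d | enorm x <= C] = 1%E ->
  (forall i, 0 < w i) ->
  0 < eta < 1 ->
  (forall i, (1 - eta) * Zpart P (v i) <= Zhat i <= (1 + eta) * Zpart P (v i)) ->
  (forall i, (W2 (Phat i) (tilt P (v i)) <= eps_lin%:E)%E) ->
  (forall i, Phat i [set x : Rd R d | enorm x <= C] = 1%E) ->
  (W2 (mixture (mixw w Zhat) Phat)
      (mixture (mixw w (fun i => Zpart P (v i))) (fun i => tilt P (v i)))
   <= (eps_lin + 2 * C * Num.sqrt (eta / (1 - eta)))%:E)%E.
Proof.
move=> m_gt0 P_ball w_gt0 /andP[eta_gt0 eta_lt1] Zhat_bounds W2_le Phat_ball.
set Z := fun i => Zpart P (v i); set ball := [set x : Rd R d | enorm x <= C].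
have mball : measurable ball := measurable_enorm_le C.
have eps_ge0 : 0 <= eps_lin.
  by rewrite -lee_fin (le_trans (sqrte_ge0 _) (W2_le (Ordinal m_gt0))).
have Z_gt0 i : 0 < Z i := Zpart_gt0 P_ball (v i).
have wZ_gt0 i : 0 < w i * Z i by rewrite mulr_gt0.
have wZhat_gt0 i : 0 < w i * Zhat i.
  rewrite mulr_gt0//; case/andP: (Zhat_bounds i) => + _; apply: lt_le_trans.
  by rewrite mulr_gt0 ?subr_gt0 ?(Z_gt0 i).
have off_ball (Q : probability (Rd R d) R) : Q ball = 1%E -> Q (~` ball) = 0%E.
  by move=> Q_ball; rewrite probability_setC// Q_ball subee.
have W2sq_mix := W2sq_mixture_le (mixw_ge0 wZhat_gt0) (mixw_ge0 wZ_gt0)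
  (sum_mixw wZhat_gt0 m_gt0) (sum_mixw wZ_gt0 m_gt0)
  (fun i => off_ball _ (Phat_ball i))
  (fun i => tilt_null (v i) (measurableC mball) (off_ball _ P_ball))
  (sqr_ge0 eps_lin) (fun i => W2sq_le_sqr eps_ge0 (W2_le i)).
have tv_le := tv_dist_mixw_le m_gt0 w_gt0 Z_gt0 (ltW eta_gt0) eta_lt1 Zhat_bounds.
have eta_le : eta <= eta / (1 - eta) by rewrite ler_pdivlMr ?subr_gt0//; nra.
have C_ge0 := ball_radius_ge0 P_ball.
apply: W2_le_add; rewrite ?mulr_ge0 ?sqrtr_ge0//; apply: le_trans W2sq_mix _.
rewrite lee_fin lerD2l !exprMn sqr_sqrtr; last by apply: divr_ge0; rewrite ?subr_ge0 ltW.
by have := sqr_ge0 C; nra.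
Qed.
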